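(* Let $q$ be a power of $2$, let $b\in\mathbb{F}_q$ with $b\ne0$, and let $n\ge2$ be an integer. Let $r\ge0$ be such that $2^r$ divides $n+1$ but $2^{r+1}$ does not, and let $m\ge0$ be defined by $n+1=2^r(m+1)$. Assume $r\ge1$ and $\gcd(m+1,q^2-1)=1$. Then $\hat C_n(a,b)$ is LCD for every $a\in\mathbb{F}_q\setminus\{1\}$.
   Context: For $a,b\in\mathbb{F}_q$ and $n\ge 2$, $\hat T_n(a,b)$ denotes the $n\times n$ symmetric tridiagonal Toeplitz matrix over $\mathbb{F}_q$ with all diagonal entries equal to $a$, all entries on the first super- and sub-diagonals equal to $b$, and all other entries $0$. $\hat C_n(a,b)$ is the $[2n,n]$ linear code over $\mathbb{F}_q$ with generator matrix $[I_n\mid \hat T_n(a,b)]$. A linear code $C$ is LCD if $C\cap C^\perp=\{0\}$ (Euclidean dual). *)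

From HB Require Import structures.
From mathcomp Require Import all_boot all_order all_algebra all_field.
Set Implicit Arguments. Unset Strict Implicit. Unset Printing Implicit Defensive.
Import GRing.Theory.
Local Open Scope ring_scope.

Definition tridiagT (F : fieldType) (n : nat) (a b : F) : 'M[F]_n :=
  \matrix_(i < n, j < n)
     if i == j then a
     else if (i.+1 == j :> nat) || (j.+1 == i :> nat) then b else 0.

Definition genC (F : fieldType) (n : nat) (a b : F) : 'M[F]_(n, n + n) :=
  row_mx 1%:M (tridiagT n a b).

Definition in_code (F : fieldType) (k N : nat) (G : 'M[F]_(k, N)) (x : 'rV[F]_N) :=
  (x <= G)%MS.

Definition in_dual (F : fieldType) (k N : nat) (G : 'M[F]_(k, N)) (x : 'rV[F]_N) :=
  forall c : 'rV[F]_N, in_code G c -> c *m x^T = 0.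

Definition is_LCD (F : fieldType) (k N : nat) (G : 'M[F]_(k, N)) :=
  forall x : 'rV[F]_N, in_code G x -> in_dual G x -> x = 0.

(* Write q = #|F|, a power of 2, and T := T_n(1 + a, b).  Since T_n(a,b) is
   symmetric and 1 + 1 = 0, the Gram matrix of the generator matrix is
   G G^T = 1 + T_n(a,b)^2 = T^2, so by Massey's criterion the code is LCD as
   soon as T has a trivial kernel.  Solving T v = 0 row by row shows that the
   padded entries of v follow the recurrence w_{k+2} = x w_{k+1} + w_k with
   x = (1 + a)/b, whose solution with w_0 = 0, w_1 = 1 we call cheb x; hence T
   is injective whenever cheb x (n + 1) <> 0.  That value is an entry of C^{n+1},
   where C = [[x,1],[1,0]] is the companion matrix of X^2 + xX + 1, and by
   Cassini's identity cheb x (n + 1) = 0 would force C^{n+1} = 1.  This is ruled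
   out by an analysis of an arbitrary root M of X^2 + xX + 1 (x <> 0) in an
   F-algebra: Frobenius gives M^(q^2 - 1) = 1 and M^(2^s) <> 1, so M^N <> 1
   whenever gcd(N, q^2 - 1) is a power of 2, which is the case for
   N = n + 1 = 2^r (m + 1) because m + 1 is coprime to q^2 - 1. *)

From HB Require Import structures.
From mathcomp Require Import all_boot all_order all_algebra all_field.
From mathcomp Require Import ring zify.
Set Implicit Arguments. Unset Strict Implicit. Unset Printing Implicit Defensive.
Local Open Scope ring_scope.
Import GRing.Theory.

Lemma expr2nD_comm (R : nzRingType) (R_char2 : 2%N \in [pchar R]) (u v : R) s :
  GRing.comm u v -> (u + v) ^+ (2 ^ s) = u ^+ (2 ^ s) + v ^+ (2 ^ s).
Proof.
move=> cuv; elim: s => [|s IH]; first by rewrite !expr1.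
rewrite expnSr !exprM IH.
by apply: (pFrobenius_autD_comm R_char2); apply/commrX/commr_sym/commrX.
Qed.

Lemma sqrrD_comm_pchar2 (R : nzRingType) (R_char2 : 2%N \in [pchar R]) (u v : R) :
  GRing.comm u v -> (u + v) ^+ 2 = u ^+ 2 + v ^+ 2.
Proof. exact: (expr2nD_comm R_char2 1). Qed.

Lemma expr_gcdn_eq1 (R : nzRingType) (u : R) k l :
  (0 < k)%N -> u ^+ k = 1 -> u ^+ l = 1 -> u ^+ gcdn k l = 1.
Proof.
move=> k_gt0 uk1 ul1; have [c _ k_dvd] := Bezoutl l k_gt0.
by have := expr_dvd uk1 k_dvd; rewrite exprD mulnC exprM ul1 expr1n mulr1.
Qed.

Section QuadraticUnit.
Variables (F : finFieldType) (A : algType F).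
Hypothesis F_char2 : 2%N \in [pchar F].
Variables (x : F) (M : A).
Hypotheses (x_neq0 : x != 0) (M_quad : M ^+ 2 = x *: M + 1).

Let A_char2 : 2%N \in [pchar A]. Proof. by rewrite pchar_lalg. Qed.

Lemma quad_inv : M * (M + x%:A) = 1.
Proof.
by rewrite mulrDr mulr_algr -expr2 M_quad addrAC (addrr_pchar2 A_char2) add0r.
Qed.

Lemma quad_pow2 j : exists a : F, M ^+ (2 ^ j) = a%:A + x ^+ (2 ^ j - 1) *: M.
Proof.
elim: j => [|j [a IH]].
  by exists 0; rewrite expr1 subnn expr0 scale1r scale0r add0r.
exists (a ^+ 2 + x ^+ (2 ^ j - 1) ^+ 2).
have e : (2 ^ j * 2 - 1 = ((2 ^ j - 1) * 2).+1)%N.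
  by have := expn_gt0 2 j; lia.
rewrite expnSr exprM IH (sqrrD_comm_pchar2 A_char2); last exact: comm_alg.
rewrite !exprZn expr1n M_quad scalerDr scalerA -exprM e (exprSr x).
by rewrite scalerDl -addrA [_ *: M + _]addrC.
Qed.

(* M^q = a + M is again a root of X^2 + xX + 1, which forces a = 0 (so
   M^(q-1) = 1) or a = x (so M^q = M^-1 and M^(q+1) = 1). *)
Lemma quad_order : M ^+ (#|F| ^ 2 - 1) = 1.
Proof.
set q := #|F|.
have q_pow2 : q = (2 ^ logn 2 q)%N := card_pprimeChar F_char2.
have q_gt0 : (0 < q)%N by rewrite q_pow2 expn_gt0.
have xq1 : x ^+ (q - 1) = 1.
  by apply: (mulIf x_neq0); rewrite mul1r -exprSr subn1 prednK // expf_card.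
have [a Mq] := quad_pow2 (logn 2 q); rewrite -q_pow2 xq1 scale1r in Mq.
have Mq_quad : (M ^+ q) ^+ 2 = x *: M ^+ q + 1.
  rewrite -exprM mulnC exprM M_quad q_pow2 (expr2nD_comm A_char2); last exact: commr1.
  by rewrite exprZn -q_pow2 expf_card expr1n.
have a_root : a ^+ 2 = x * a.
  move: Mq_quad; rewrite Mq (sqrrD_comm_pchar2 A_char2); last exact: comm_alg.
  rewrite M_quad scalerDr scalerA -addrA => /addIr.
  by rewrite exprZn expr1n => /(fmorph_inj (in_alg A)).
have q21 : (q ^ 2 - 1 = (q - 1) * (q + 1))%N by rewrite -subn_sqr exp1n.
have [a0 | ax] : a = 0 \/ a = x.
  move/eqP: a_root; rewrite expr2 -subr_eq0 -mulrBl mulf_eq0 subr_eq0.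
  by case/orP=> /eqP; [right | left].
- have Mq1 : M ^+ (q - 1) = 1.
    by rewrite -[LHS]mulr1 -quad_inv mulrA -exprSr subn1 prednK // Mq a0 scale0r add0r.
  by rewrite q21 exprM Mq1 expr1n.
- have Mq1 : M ^+ (q + 1) = 1 by rewrite addn1 exprS Mq ax addrC quad_inv.
  by rewrite q21 mulnC exprM Mq1 expr1n.
Qed.

(* If M^(2^s) = 1 then (M + 1)^(2^(s+1)) = 0, whereas (M + 1)^2 = xM makes it
   x^(2^s) M^(2^s) = x^(2^s) <> 0. *)
Lemma quad_pow2_neq1 s : M ^+ (2 ^ s) != 1.
Proof.
apply/eqP => M2s1.
have M1_sq : (M + 1) ^+ 2 = x *: M.
  rewrite (sqrrD_comm_pchar2 A_char2) ?expr1n ?M_quad; last exact: commr1.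
  by rewrite -addrA (addrr_pchar2 A_char2) addr0.
have : (M + 1) ^+ (2 ^ s * 2) = 0.
  rewrite exprM (expr2nD_comm A_char2); last exact: commr1.
  by rewrite M2s1 expr1n (addrr_pchar2 A_char2) expr0n.
rewrite mulnC exprM M1_sq exprZn M2s1 => /eqP.
by rewrite scaler_eq0 oner_eq0 orbF expf_eq0 (negbTE x_neq0) andbF.
Qed.

(* The order of M divides q^2 - 1 and is not a power of 2, so it cannot divide
   2^r (m + 1) when m + 1 is coprime to q^2 - 1. *)
Lemma quad_pow_neq1 r m :
  coprime m.+1 (#|F| ^ 2 - 1) -> M ^+ (2 ^ r * m.+1) != 1.
Proof.
move=> co_m; apply/negP => /eqP Mn1.
set g := gcdn (2 ^ r * m.+1) (#|F| ^ 2 - 1).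
have Mg1 : M ^+ g = 1.
  by apply: expr_gcdn_eq1 Mn1 quad_order; rewrite muln_gt0 expn_gt0.
have g_dvd : (g %| 2 ^ r)%N.
  have co_g : coprime g m.+1 by rewrite coprime_sym (coprime_dvdr (dvdn_gcdr _ _)).
  by rewrite -(Gauss_dvdl _ co_g) dvdn_gcdl.
have [s _ g_pow2] := dvdn_pfactor g r (isT : prime 2) g_dvd.
by have := quad_pow2_neq1 s; rewrite -g_pow2 Mg1 eqxx.
Qed.

End QuadraticUnit.

(* The sequence 0, 1, x, x^2 + 1, ... defined by w_{k+2} = x w_{k+1} + w_k
   (Chebyshev-type polynomials of the second kind, up to signs). *)
Fixpoint cheb (R : nzSemiRingType) (x : R) (k : nat) : R :=
  match k with
  | 0 => 0
  | 1 => 1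
  | (k'.+1 as k1).+1 => x * cheb x k1 + cheb x k'
  end.

Lemma chebSS (R : nzSemiRingType) (x : R) k : cheb x k.+2 = x * cheb x k.+1 + cheb x k.
Proof. by []. Qed.

Arguments cheb : simpl never.

Lemma cassini (R : comNzRingType) (x : R) k :
  cheb x k.+1 ^+ 2 - cheb x k.+2 * cheb x k = (- 1) ^+ k.
Proof.
elim: k => [|k IH]; first by rewrite chebSS /cheb /=; ring.
by rewrite (exprS (-1)) -IH !chebSS; ring.
Qed.

(* The companion matrix [[x, 1], [1, 0]] of X^2 + xX + 1 (up to signs),
   written so that its powers are visibly given by cheb. *)
Definition companion (R : nzSemiRingType) (x : R) : 'M[R]_2 :=
  \matrix_(i, j) cheb x (2 - i - j).

Lemma companion_pow (R : comNzRingType) (x : R) k :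
  companion x ^+ k.+1 = \matrix_(i, j) cheb x (k.+2 - i - j).
Proof.
elim: k => [|k IH]; first by rewrite expr1.
rewrite exprSr IH; apply/matrixP => i j.
rewrite !mxE !big_ord_recl big_ord0 !mxE.
case: i => [[|[|//]] ?]; case: j => [[|[|//]] ?];
  by rewrite /= ?subn0 ?subSS ?subn0 ?chebSS /cheb /=; ring.
Qed.

Lemma companion_quad (R : comNzRingType) (x : R) :
  companion x ^+ 2 = x *: companion x + 1.
Proof.
rewrite companion_pow; apply/matrixP => i j; rewrite !mxE.
case: i => [[|[|//]] ?]; case: j => [[|[|//]] ?];
  by rewrite /= ?chebSS /cheb /=; ring.
Qed.

(* The arithmetic core: if cheb x (n + 1) = 0 then, by Cassini, the companion
   matrix satisfies C^(n+1) = 1, contradicting quad_pow_neq1. *)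
Lemma cheb_neq0 (F : finFieldType) (F_char2 : 2%N \in [pchar F]) (x : F) n r m :
  x != 0 -> n.+1 = (2 ^ r * m.+1)%N -> coprime m.+1 (#|F| ^ 2 - 1) ->
  cheb x n.+1 != 0.
Proof.
move=> x_neq0 n_fact co_m; apply/negP => /eqP w0.
have w2 : cheb x n.+2 = cheb x n by rewrite chebSS w0 mulr0 add0r.
have w1 : cheb x n = 1.
  have := cassini x n; rewrite w0 w2 expr0n sub0r -expr2 !(oppr_pchar2 F_char2).
  rewrite expr1n => /eqP; rewrite sqrf_eq1 (oppr_pchar2 F_char2) orbb.
  by move/eqP.
have Cn1 : companion x ^+ n.+1 = 1.
  rewrite companion_pow; apply/matrixP => i j; rewrite !mxE.
  case: i => [[|[|//]] ?]; case: j => [[|[|//]] ?];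
    by rewrite /= ?subn0 ?subSS ?subn0 ?w2 ?w1 ?w0.
have := quad_pow_neq1 F_char2 x_neq0 (companion_quad x) r co_m.
by rewrite -n_fact Cn1 eqxx.
Qed.

(* The entries of a column vector v, shifted by one and padded with zeros:
   pad v (i + 1) = v_i for i < n, and pad v 0 = pad v (n + 1) = 0. *)
Definition pad (R : nzRingType) n (v : 'cV[R]_n) (k : nat) : R :=
  \sum_(j < n) (if j.+1 == k then v j 0 else 0).

Section Pad.
Variables (R : nzRingType) (n : nat) (v : 'cV[R]_n).

Lemma pad0 : pad v 0 = 0.
Proof. by rewrite /pad big1. Qed.

Lemma padS (i : 'I_n) : pad v i.+1 = v i 0.
Proof.
rewrite /pad (bigD1 i) //= eqxx big1 ?addr0 // => j ne_ji.
by rewrite eqSS val_eqE (negbTE ne_ji).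
Qed.

Lemma pad_out : pad v n.+1 = 0.
Proof. by rewrite /pad big1 // => j _; rewrite eqSS ltn_eqF. Qed.

End Pad.

Lemma tridiag_row (R : fieldType) n (a b : R) (v : 'cV[R]_n) (i : 'I_n) :
  (tridiagT n a b *m v) i 0 = b * pad v i + a * pad v i.+1 + b * pad v i.+2.
Proof.
rewrite /pad !mulr_sumr -!big_split mxE; apply: eq_bigr => j _.
rewrite !mxE !eqSS /= -val_eqE /=.
by do ! case: eqP => /= ?; rewrite ?mulr0 ?mul0r ?addr0 ?add0r //; lia.
Qed.

Lemma cheb_solution (R : comNzRingType) (x : R) (p : nat -> R) N :
  p 0%N = 0 -> (forall i, (i < N)%N -> p i.+2 = x * p i.+1 + p i) ->
  forall k, (k <= N.+1)%N -> p k = p 1%N * cheb x k.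
Proof.
move=> p0 p_rec.
have pair k : (k <= N)%N -> p k = p 1%N * cheb x k /\ p k.+1 = p 1%N * cheb x k.+1.
  elim: k => [|k IH] k_le; first by rewrite p0 /cheb /= mulr0 mulr1.
  have [IH0 IH1] := IH (ltnW k_le).
  by split=> //; rewrite p_rec // IH1 IH0 chebSS; ring.
move=> k; rewrite leq_eqVlt ltnS => /orP[/eqP -> | k_le]; last by case: (pair k k_le).
by case: (pair N (leqnn N)).
Qed.

(* In characteristic 2, T_n(c,b) is injective when cheb (c/b) (n + 1) <> 0:
   the padded entries of a kernel vector are pad v 1 * cheb (c/b), and the
   boundary condition pad v (n + 1) = 0 forces pad v 1 = 0. *)
Lemma tridiag_ker (F : fieldType) (F_char2 : 2%N \in [pchar F]) n (c b : F)
  (v : 'cV[F]_n) :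
  b != 0 -> cheb (c / b) n.+1 != 0 -> tridiagT n c b *m v = 0 -> v = 0.
Proof.
move=> b_neq0 w_neq0 Tv0.
have p_rec i : (i < n)%N -> pad v i.+2 = c / b * pad v i.+1 + pad v i.
  move=> lt_in; have := congr1 (fun u : 'cV_n => u (Ordinal lt_in) 0) Tv0.
  rewrite tridiag_row mxE /= => row0.
  apply: (mulfI b_neq0); move/eqP: row0; rewrite addr_eq0 (oppr_pchar2 F_char2).
  by move=> /eqP <-; field.
have p_cheb := cheb_solution (pad0 v) p_rec.
have p1_0 : pad v 1%N = 0.
  have := p_cheb n.+1 (leqnn _); rewrite pad_out => /esym/eqP.
  by rewrite mulf_eq0 (negbTE w_neq0) orbF => /eqP.
apply/matrixP => i j; rewrite ord1 mxE -padS p_cheb ?p1_0 ?mul0r //.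
by rewrite ltnS ltnW.
Qed.

(* Massey's criterion (one direction): a code whose Gram matrix G G^T is
   injective is LCD, since u G in the dual means G G^T u^T = 0. *)
Lemma LCD_of_gram_ker (F : fieldType) k N (G : 'M[F]_(k, N)) :
  (forall w : 'cV_k, G *m G^T *m w = 0 -> w = 0) -> is_LCD G.
Proof.
move=> gram_ker y /submxP [u ->] y_dual.
have Gy0 : G *m (u *m G)^T = 0.
  by apply/row_matrixP => i; rewrite row_mul row0; apply: y_dual; apply: row_sub.
have uT0 : u^T = 0 by apply: gram_ker; rewrite -mulmxA -trmx_mul.
by rewrite -[u]trmxK uT0 trmx0 mul0mx.
Qed.

Lemma tridiag_tr (F : fieldType) n (a b : F) : (tridiagT n a b)^T = tridiagT n a b.
Proof. by apply/matrixP => i j; rewrite !mxE eq_sym orbC. Qed.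

Lemma tridiag_addl (F : fieldType) n (c a b : F) :
  tridiagT n (c + a) b = c%:M + tridiagT n a b.
Proof.
apply/matrixP => i j; rewrite !mxE eq_sym.
by case: eqP => _; rewrite ?mulr1n ?mulr0n ?add0r.
Qed.

Lemma genC_gram (F : fieldType) (F_char2 : 2%N \in [pchar F]) n (a b : F) :
  genC n a b *m (genC n a b)^T = tridiagT n (1 + a) b *m tridiagT n (1 + a) b.
Proof.
rewrite /genC tr_row_mx mul_row_col trmx1 mulmx1 tridiag_tr tridiag_addl.
rewrite mulmxDl !mulmxDr !mul1mx mulmx1 -(addrA 1%:M) (addrA (tridiagT n a b)).
suff -> : tridiagT n a b + tridiagT n a b = 0 by rewrite add0r.
by apply/matrixP => i j; rewrite !mxE (addrr_pchar2 F_char2).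
Qed.

Theorem corollary2p7 (F : finFieldType) (h2 : 2%N \in [pchar F])
  (n r m : nat) (hn : (2 <= n)%N) (b : F) (hb : b != 0)
  (hr_div : (2 ^ r %| n.+1)%N) (hr_ndiv : ~~ (2 ^ r.+1 %| n.+1)%N)
  (hm : n.+1 = (2 ^ r * m.+1)%N)
  (hr1 : (1 <= r)%N)
  (hcop : coprime m.+1 (#|F| ^ 2 - 1)) :
  forall a : F, a != 1 -> is_LCD (genC n a b).
Proof.
move=> a a_neq1.
have x_neq0 : (1 + a) / b != 0.
  by rewrite mulf_neq0 ?invr_eq0 // addrC addr_eq0 (oppr_pchar2 h2).
have T_ker := tridiag_ker h2 hb (cheb_neq0 h2 x_neq0 hm hcop).
by apply: LCD_of_gram_ker => w; rewrite (genC_gram h2) -mulmxA => /T_ker /T_ker.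
Qed.
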